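(* Let $S$ be an inverse semigroup and $\rho$ an idempotent separating congruence on $S$. Then there exist a group $G$ and an action of $T=S/\rho$ on $G$ by endomorphisms on the left such that the extension $(S,\rho)$ can be embedded into the $\lambda$-semidirect product extension $(G\rtimes_\lambda T,\vartheta_2)$, i.e. there is an injective homomorphism $\psi\colon S\to G\rtimes_\lambda T$ such that the congruence induced on $S$ by $\psi$ followed by the second projection $G\rtimes_\lambda T\to T$ is exactly $\rho$.
   Context: A congruence is idempotent separating if no two distinct idempotents are related. Let $K$ be a semigroup and $T$ an inverse semigroup; $T$ acts on $K$ if an antihomomorphism $t\mapsto\varepsilon_t$ from $T$ into the endomorphism monoid of $K$ is given (so $\varepsilon_u\varepsilon_t=\varepsilon_{tu}$); write ${}^t a$ for $a\varepsilon_t$. The $\lambda$-semidirect product $K\rtimes_\lambda T$ is the set $\{(a,t)\in K\times T: {}^{tt^{-1}}a=a\}$ with multiplication $(a,t)(b,u)=({}^{(tu)(tu)^{-1}}a\cdot {}^t b,\ tu)$, and $\vartheta_2$ is the congruence induced by the second projection $(a,t)\mapsto t$. *)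

From Stdlib Require Import ClassicalEpsilon.
Set Implicit Arguments.

(* An inverse semigroup: a regular semigroup (with a chosen inverse x^-1,
   x x^-1 x = x, x^-1 x x^-1 = x^-1) whose idempotents commute.
   (Equivalently: every element has a unique inverse.) *)
Record InvSemigroup := {
  is_car :> Type;
  is_mul : is_car -> is_car -> is_car;
  is_inv : is_car -> is_car;
  is_assoc : forall x y z, is_mul x (is_mul y z) = is_mul (is_mul x y) z;
  is_inv_l : forall x, is_mul (is_mul x (is_inv x)) x = x;
  is_inv_r : forall x, is_mul (is_mul (is_inv x) x) (is_inv x) = is_inv x;
  is_idem_comm : forall e f, is_mul e e = e -> is_mul f f = f ->
                   is_mul e f = is_mul f e
}.

Record Group := {
  g_car :> Type;
  g_mul : g_car -> g_car -> g_car;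
  g_one : g_car;
  g_inv : g_car -> g_car;
  g_assoc : forall x y z, g_mul x (g_mul y z) = g_mul (g_mul x y) z;
  g_one_l : forall x, g_mul g_one x = x;
  g_inv_l : forall x, g_mul (g_inv x) x = g_one
}.

Section Defs.
Variable S : InvSemigroup.
Local Notation "x * y" := (is_mul S x y).

Definition is_congruence (rho : S -> S -> Prop) : Prop :=
  (forall a, rho a a) /\
  (forall a b, rho a b -> rho b a) /\
  (forall a b c, rho a b -> rho b c -> rho a c) /\
  (forall a b c, rho a b -> rho (c * a) (c * b) /\ rho (a * c) (b * c)).

Definition idempotent (e : S) : Prop := e * e = e.

Definition idempotent_separating (rho : S -> S -> Prop) : Prop :=
  forall e f, idempotent e -> idempotent f -> rho e f -> e = f.

(* The quotient S / rho: the set of rho-classes, with the induced operations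
   (computed on chosen representatives; well defined when rho is a congruence). *)
Definition quot (rho : S -> S -> Prop) : Type :=
  { A : S -> Prop | exists s, A = rho s }.

Definition qcls (rho : S -> S -> Prop) (s : S) : quot rho :=
  exist _ (rho s) (ex_intro _ s eq_refl).

Definition qrep (rho : S -> S -> Prop) (A : quot rho) : S :=
  proj1_sig (constructive_indefinite_description _ (proj2_sig A)).

Definition qmul (rho : S -> S -> Prop) (A B : quot rho) : quot rho :=
  qcls rho (qrep A * qrep B).

Definition qinv (rho : S -> S -> Prop) (A : quot rho) : quot rho :=
  qcls rho (is_inv S (qrep A)).

End Defs.

(* A left action of T (with multiplication tmul) on the group G by
   endomorphisms: t |-> act t is an antihomomorphism into End(G) for
   right-written composition, i.e. act t (act u a) = act (t u) a. *)
Definition is_action (G : Group) (T : Type) (tmul : T -> T -> T)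
    (act : T -> G -> G) : Prop :=
  (forall t a b, act t (g_mul G a b) = g_mul G (act t a) (act t b)) /\
  (forall t u a, act t (act u a) = act (tmul t u) a).

Definition in_lsd (G : Group) (T : Type) (tmul : T -> T -> T) (tinv : T -> T)
    (act : T -> G -> G) (p : G * T) : Prop :=
  act (tmul (snd p) (tinv (snd p))) (fst p) = fst p.

Definition lsd_mul (G : Group) (T : Type) (tmul : T -> T -> T) (tinv : T -> T)
    (act : T -> G -> G) (p q : G * T) : G * T :=
  let tu := tmul (snd p) (snd q) in
  (g_mul G (act (tmul tu (tinv tu)) (fst p)) (act (snd p) (fst q)), tu).

(* Write ran a = a a^-1 and dom a = a^-1 a.  Since rho separates idempotents,
   a rho b forces ran a = ran b and dom a = dom b, so the rho-class N_e of an
   idempotent e is a group with identity e.  Choose a representative u' of each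
   u in T = S/rho and let G be the product of the groups N_(ran u'), u in T.
   Writing u <| t for dom u' <= ran t', T acts on G by
     (t.f)(u) = f(ut) if u <| t, and 1 otherwise,
   and s is sent to (phi_s, s rho) with
     phi_s(u) = u' s ((u (s rho))')^-1 if u <| s rho, and 1 otherwise;
   the truncation by <| is what makes both the action and phi multiplicative.
   For u = (ran s) rho one gets s = u'^-1 phi_s(u) (u (s rho))', and the right
   hand side depends only on phi_s and s rho: this is injectivity. *)

From Stdlib Require Import ClassicalEpsilon FunctionalExtensionality PropExtensionality ProofIrrelevance.
Set Implicit Arguments.

Lemma mulA {S : InvSemigroup} (x y z : S) :
  is_mul S (is_mul S x y) z = is_mul S x (is_mul S y z).
Proof. symmetry; apply is_assoc. Qed.

Ltac reassoc := repeat rewrite mulA.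

Ltac case_below P H := destruct (excluded_middle_informative P) as [H|H].

Section InverseSemigroup.
Context {S : InvSemigroup}.
Local Notation "x * y" := (is_mul S x y).
Local Notation inv := (is_inv S).

Definition ran (x : S) : S := x * inv x.
Definition dom (x : S) : S := inv x * x.

Lemma ran_mulK x : ran x * x = x.
Proof. apply is_inv_l. Qed.

Lemma ran_mulKA x z : ran x * (x * z) = x * z.
Proof. rewrite <- mulA, ran_mulK; reflexivity. Qed.

Lemma mul_domK x : x * dom x = x.
Proof. unfold dom; rewrite is_assoc; apply is_inv_l. Qed.

Lemma mul_domKA x z : x * (dom x * z) = x * z.
Proof. rewrite <- mulA, mul_domK; reflexivity. Qed.

Lemma mul_mul_domKA a x z : a * (x * (dom (a * x) * z)) = a * (x * z).
Proof. rewrite <- mulA, mul_domKA, mulA; reflexivity. Qed.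

Lemma dom_invK x : dom x * inv x = inv x.
Proof. apply is_inv_r. Qed.

Lemma inv_ranK x : inv x * ran x = inv x.
Proof. unfold ran; rewrite is_assoc; apply is_inv_r. Qed.

Lemma mul_invA x z : x * (inv x * z) = ran x * z.
Proof. unfold ran; rewrite mulA; reflexivity. Qed.

Lemma inv_mulA x z : inv x * (x * z) = dom x * z.
Proof. unfold dom; rewrite mulA; reflexivity. Qed.

Lemma idempotent_ran x : idempotent S (ran x).
Proof. unfold idempotent; unfold ran at 2; rewrite <- mulA, ran_mulK; reflexivity. Qed.

Lemma idempotent_dom x : idempotent S (dom x).
Proof. unfold idempotent; unfold dom at 2; rewrite <- mulA, dom_invK; reflexivity. Qed.

Lemma idempotent_comm e f : idempotent S e -> idempotent S f -> e * f = f * e.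
Proof. apply is_idem_comm. Qed.

Lemma idempotent_commA e f z :
  idempotent S e -> idempotent S f -> e * (f * z) = f * (e * z).
Proof. intros He Hf; rewrite <- !mulA, (idempotent_comm He Hf); reflexivity. Qed.

Lemma idempotent_mul e f : idempotent S e -> idempotent S f -> idempotent S (e * f).
Proof.
  unfold idempotent; intros He Hf.
  reassoc; rewrite (idempotent_commA _ Hf He), <- mulA, He, Hf; reflexivity.
Qed.

Lemma inv_unique x y : x * (y * x) = x -> y * (x * y) = y -> y = inv x.
Proof.
  intros Hx Hy.
  assert (Ixy : idempotent S (x * y)) by (unfold idempotent; rewrite mulA, Hy; reflexivity).
  assert (Iyx : idempotent S (y * x)) by (unfold idempotent; rewrite mulA, Hx; reflexivity).
  assert (Ey_dom : y = dom x * y).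
  { transitivity (y * x * (dom x * y)).
    - rewrite mulA, mul_domKA, Hy; reflexivity.
    - rewrite <- mulA, (idempotent_comm Iyx (idempotent_dom x)); reassoc.
      rewrite Hy; reflexivity. }
  assert (Ey_ran : y = y * ran x).
  { transitivity (y * (ran x * (x * y))).
    - rewrite ran_mulKA, Hy; reflexivity.
    - rewrite (idempotent_comm (idempotent_ran x) Ixy), <- mulA, Hy; reflexivity. }
  rewrite Ey_dom, Ey_ran; unfold dom, ran; reassoc.
  rewrite (is_assoc S y x), (is_assoc S x (y * x)), Hx.
  apply inv_ranK.
Qed.

Lemma inv_mul x y : inv (x * y) = inv y * inv x.
Proof.
  symmetry; apply inv_unique; reassoc.
  - rewrite mul_invA, inv_mulA, (idempotent_commA _ (idempotent_ran y) (idempotent_dom x)).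
    rewrite mul_domKA, ran_mulK; reflexivity.
  - rewrite inv_mulA, mul_invA, (idempotent_commA _ (idempotent_dom x) (idempotent_ran y)).
    rewrite <- mulA, inv_ranK, dom_invK; reflexivity.
Qed.

Lemma idempotent_inv e : idempotent S e -> inv e = e.
Proof. intro He; symmetry; apply inv_unique; rewrite !He; reflexivity. Qed.

Lemma ran_idempotent e : idempotent S e -> ran e = e.
Proof. intro He; unfold ran; rewrite idempotent_inv; auto. Qed.

Lemma dom_idempotent e : idempotent S e -> dom e = e.
Proof. intro He; unfold dom; rewrite idempotent_inv; auto. Qed.

Lemma ran_mul x y : ran (x * y) = x * (ran y * inv x).
Proof. unfold ran; rewrite inv_mul; reassoc; reflexivity. Qed.

Lemma dom_mul x y : dom (x * y) = inv y * (dom x * y).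
Proof. unfold dom; rewrite inv_mul; reassoc; reflexivity. Qed.

Definition dom_below_ran (a b : S) : Prop := dom a * ran b = dom a.

Lemma dom_below_ran_mulr a b : dom_below_ran a b -> a * ran b = a.
Proof.
  unfold dom_below_ran; intro H.
  rewrite <- (mul_domK a) at 1; rewrite mulA, H; apply mul_domK.
Qed.

Lemma dom_below_ran_conj a b : dom_below_ran a b -> a * (ran b * inv a) = ran a.
Proof.
  unfold dom_below_ran; intro H.
  rewrite <- mul_domKA, <- (mulA (dom a)), H, mul_domKA; reflexivity.
Qed.

Lemma dom_below_ran_mul_iff a b c :
  dom_below_ran a (b * c) <-> dom_below_ran a b /\ dom_below_ran (a * b) c.
Proof.
  unfold dom_below_ran; rewrite ran_mul, dom_mul.
  set (p := dom a); assert (Ip : idempotent S p) by apply idempotent_dom.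
  split.
  - intro H; split.
    + rewrite <- H at 1; reassoc; rewrite inv_ranK; exact H.
    + reassoc; rewrite <- H at 2; reassoc; fold (dom b).
      rewrite (idempotent_comm (idempotent_ran c) (idempotent_dom b)), mul_domKA.
      reflexivity.
  - intros [Hb Hc].
    assert (Hc' : forall z, inv b * (p * (b * (ran c * z))) = inv b * (p * (b * z))).
    { intro z; transitivity (inv b * (p * b) * ran c * z); [reassoc; reflexivity|].
      rewrite Hc; reassoc; reflexivity. }
    transitivity (ran b * (p * (b * (ran c * inv b)))).
    + rewrite (idempotent_commA _ (idempotent_ran b) Ip), ran_mulKA; reflexivity.
    + unfold ran at 1; rewrite mulA, Hc', mul_invA.
      rewrite (idempotent_commA _ (idempotent_ran b) Ip), idempotent_ran; exact Hb.
Qed.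

End InverseSemigroup.

Lemma proj1_sig_inj (X : Type) (P : X -> Prop) (x y : sig P) :
  proj1_sig x = proj1_sig y -> x = y.
Proof. apply eq_sig_hprop; intros; apply proof_irrelevance. Qed.

Section Congruence.
Variables (S : InvSemigroup) (rho : S -> S -> Prop).
Hypotheses (Hcong : is_congruence S rho) (Hsep : idempotent_separating S rho).
Local Notation "x * y" := (is_mul S x y).
Local Notation inv := (is_inv S).

Lemma cong_refl a : rho a a.
Proof. apply (proj1 Hcong). Qed.

Lemma cong_sym a b : rho a b -> rho b a.
Proof. apply (proj1 (proj2 Hcong)). Qed.

Lemma cong_trans a b c : rho a b -> rho b c -> rho a c.
Proof. apply (proj1 (proj2 (proj2 Hcong))). Qed.

Lemma cong_mull c a b : rho a b -> rho (c * a) (c * b).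
Proof. intro H; apply (proj2 (proj2 (proj2 Hcong)) _ _ c H). Qed.

Lemma cong_mulr c a b : rho a b -> rho (a * c) (b * c).
Proof. intro H; apply (proj2 (proj2 (proj2 Hcong)) _ _ c H). Qed.

Lemma cong_mul a b c d : rho a b -> rho c d -> rho (a * c) (b * d).
Proof. intros; eapply cong_trans; [apply cong_mull | apply cong_mulr]; eauto. Qed.

Lemma cong_ran a b : rho a b -> ran a = ran b.
Proof.
  assert (below : forall a b, rho a b -> ran a * ran b = ran b).
  { intros x y H; apply Hsep.
    - apply idempotent_mul; apply idempotent_ran.
    - apply idempotent_ran.
    - eapply cong_trans; [apply cong_mull, cong_mulr, cong_sym, H|].
      rewrite ran_mulKA; apply cong_mulr, H. }
  intro H; rewrite <- (below b a (cong_sym H)), idempotent_comm by apply idempotent_ran.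
  apply below, H.
Qed.

Lemma cong_dom a b : rho a b -> dom a = dom b.
Proof.
  assert (below : forall a b, rho a b -> dom a * dom b = dom a).
  { intros x y H; apply Hsep.
    - apply idempotent_mul; apply idempotent_dom.
    - apply idempotent_dom.
    - unfold dom at 1 2; reassoc.
      eapply cong_trans; [apply cong_mull, cong_mulr, H|].
      fold (dom y); rewrite mul_domK; apply cong_mull, cong_sym, H. }
  intro H; rewrite <- (below a b H), idempotent_comm by apply idempotent_dom.
  apply below, cong_sym, H.
Qed.

Lemma cong_inv a b : rho a b -> rho (inv a) (inv b).
Proof.
  intro H; rewrite <- (inv_ranK a), (cong_ran H); unfold ran.
  eapply cong_trans; [apply cong_mull, cong_mulr, cong_sym, H|].
  rewrite <- mulA; fold (dom a); rewrite (cong_dom H), dom_invK; apply cong_refl.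
Qed.

Lemma cong_dom_below_ran a a' b b' :
  rho a a' -> rho b b' -> dom_below_ran a b -> dom_below_ran a' b'.
Proof.
  unfold dom_below_ran; intros Ha Hb; rewrite (cong_dom Ha), (cong_ran Hb); auto.
Qed.

Local Notation T := (quot S rho).
Local Notation cls := (qcls S rho).
Local Notation rep := (@qrep S rho).
Local Notation qm := (@qmul S rho).
Local Notation qi := (@qinv S rho).

Lemma qcls_eq a b : cls a = cls b <-> rho a b.
Proof.
  split.
  - intro E; apply (f_equal (@proj1_sig _ _)) in E; simpl in E.
    rewrite E; apply cong_refl.
  - intro H; apply proj1_sig_inj; simpl.
    extensionality z; apply propositional_extensionality.
    split; intro; eapply cong_trans; eauto using cong_sym.
Qed.

Lemma qrepK X : cls (rep X) = X.
Proof.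
  apply proj1_sig_inj; unfold qrep.
  destruct (constructive_indefinite_description _ _) as [s Hs]; simpl.
  symmetry; exact Hs.
Qed.

Lemma qrep_qcls s : rho (rep (cls s)) s.
Proof. apply qcls_eq; rewrite qrepK; reflexivity. Qed.

Lemma qmul_qcls a b : qm (cls a) (cls b) = cls (a * b).
Proof. apply qcls_eq; apply cong_mul; apply qrep_qcls. Qed.

Lemma qrep_qmul X Y : rho (rep (qm X Y)) (rep X * rep Y).
Proof. apply qrep_qcls. Qed.

Lemma qrep_qinv X : rho (rep (qi X)) (inv (rep X)).
Proof. apply qrep_qcls. Qed.

Lemma qmulA X Y Z : qm (qm X Y) Z = qm X (qm Y Z).
Proof.
  rewrite <- (qrepK X), <- (qrepK Y), <- (qrepK Z), !qmul_qcls, mulA; reflexivity.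
Qed.

Definition qran (u : T) : S := ran (rep u).
Definition qdom_below_ran (u t : T) : Prop := dom_below_ran (rep u) (rep t).

Lemma qran_qmul u t : qdom_below_ran u t -> qran (qm u t) = qran u.
Proof.
  intro H; unfold qran; rewrite (cong_ran (qrep_qmul u t)), ran_mul.
  apply dom_below_ran_conj, H.
Qed.

Lemma qdom_below_ran_qmul_iff u t v :
  qdom_below_ran u (qm t v) <-> qdom_below_ran u t /\ qdom_below_ran (qm u t) v.
Proof.
  unfold qdom_below_ran, dom_below_ran.
  rewrite (cong_ran (qrep_qmul t v)), (cong_dom (qrep_qmul u t)).
  apply dom_below_ran_mul_iff.
Qed.

Lemma ran_qmul_qinv t : ran (rep (qm t (qi t))) = qran t.
Proof.
  rewrite (cong_ran (cong_trans (qrep_qmul t (qi t)) (cong_mull _ (qrep_qinv t)))).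
  apply ran_idempotent, idempotent_ran.
Qed.

Lemma qdom_below_ran_qmul_qinv u t :
  qdom_below_ran u (qm t (qi t)) <-> qdom_below_ran u t.
Proof. unfold qdom_below_ran, dom_below_ran; rewrite ran_qmul_qinv; reflexivity. Qed.

Lemma qmul_qmul_qinv u t : qdom_below_ran u t -> qm u (qm t (qi t)) = u.
Proof.
  intro H; rewrite <- (qrepK u) at 2; apply qcls_eq.
  eapply cong_trans; [apply cong_mull, qrep_qmul|].
  eapply cong_trans; [apply cong_mull, cong_mull, qrep_qinv|].
  fold (ran (rep t)); rewrite (dom_below_ran_mulr H); apply cong_refl.
Qed.

Definition ker_valued (f : T -> S) : Prop := forall u, rho (f u) (qran u).

Definition ker_fun : Type := sig ker_valued.

Lemma ker_valued_ran {n u} : rho n (qran u) -> ran n = qran u.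
Proof. intro H; rewrite (cong_ran H); apply ran_idempotent, idempotent_ran. Qed.

Lemma ker_valued_dom {n u} : rho n (qran u) -> dom n = qran u.
Proof. intro H; rewrite (cong_dom H); apply dom_idempotent, idempotent_ran. Qed.

Lemma ker_valued_mul (f g : ker_fun) : ker_valued (fun u => proj1_sig f u * proj1_sig g u).
Proof.
  intro u; unfold qran; rewrite <- (idempotent_ran (rep u)).
  apply cong_mul; [apply (proj2_sig f) | apply (proj2_sig g)].
Qed.

Lemma ker_valued_inv (f : ker_fun) : ker_valued (fun u => inv (proj1_sig f u)).
Proof.
  intro u; unfold qran; rewrite <- (idempotent_inv (idempotent_ran (rep u))).
  apply cong_inv, (proj2_sig f).
Qed.

Definition ker_mul (f g : ker_fun) : ker_fun := exist _ _ (ker_valued_mul f g).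
Definition ker_one : ker_fun := exist ker_valued qran (fun u => cong_refl _).
Definition ker_inv (f : ker_fun) : ker_fun := exist _ _ (ker_valued_inv f).

Lemma ker_mulA f g h : ker_mul f (ker_mul g h) = ker_mul (ker_mul f g) h.
Proof. apply proj1_sig_inj; extensionality u; apply is_assoc. Qed.

Lemma ker_mul1 f : ker_mul ker_one f = f.
Proof.
  apply proj1_sig_inj; extensionality u; simpl.
  rewrite <- (ker_valued_ran (proj2_sig f u)); apply ran_mulK.
Qed.

Lemma ker_mulV f : ker_mul (ker_inv f) f = ker_one.
Proof. apply proj1_sig_inj; extensionality u; apply (ker_valued_dom (proj2_sig f u)). Qed.

Definition ker_group : Group := {|
  g_car := ker_fun; g_mul := ker_mul; g_one := ker_one; g_inv := ker_inv;
  g_assoc := ker_mulA; g_one_l := ker_mul1; g_inv_l := ker_mulV |}.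

Definition act_fun (t : T) (f : T -> S) (u : T) : S :=
  if excluded_middle_informative (qdom_below_ran u t) then f (qm u t) else qran u.

Lemma ker_valued_act (f : ker_fun) t : ker_valued (act_fun t (proj1_sig f)).
Proof.
  intro u; unfold act_fun; case_below (qdom_below_ran u t) H.
  - rewrite <- (qran_qmul H); apply (proj2_sig f).
  - apply cong_refl.
Qed.

Definition ker_act (t : T) (f : ker_group) : ker_group := exist _ _ (ker_valued_act f t).

Lemma ker_act_mul t f g :
  ker_act t (g_mul ker_group f g) = g_mul ker_group (ker_act t f) (ker_act t g).
Proof.
  apply proj1_sig_inj; extensionality u; simpl; unfold act_fun.
  case_below (qdom_below_ran u t) H; [reflexivity|].
  symmetry; apply idempotent_ran.
Qed.

Lemma ker_act_comp t v f : ker_act t (ker_act v f) = ker_act (qm t v) f.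
Proof.
  apply proj1_sig_inj; extensionality u; simpl; unfold act_fun.
  pose proof (qdom_below_ran_qmul_iff u t v) as K.
  case_below (qdom_below_ran u t) Ht; case_below (qdom_below_ran (qm u t) v) Hv;
    case_below (qdom_below_ran u (qm t v)) Htv; try tauto.
  - rewrite qmulA; reflexivity.
  - apply qran_qmul, Ht.
Qed.

Lemma qrep_qmul_qcls u s : rho (rep (qm u (cls s))) (rep u * s).
Proof. eapply cong_trans; [apply qrep_qmul | apply cong_mull, qrep_qcls]. Qed.

Definition embed_fun (s : S) (u : T) : S :=
  if excluded_middle_informative (qdom_below_ran u (cls s))
  then rep u * (s * inv (rep (qm u (cls s))))
  else qran u.

Lemma ker_valued_embed s : ker_valued (embed_fun s).
Proof.
  intro u; unfold embed_fun; case_below (qdom_below_ran u (cls s)) H.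
  - eapply cong_trans; [apply cong_mull, cong_mull, cong_inv, qrep_qmul_qcls|].
    assert (Hs : dom_below_ran (rep u) s).
    { exact (cong_dom_below_ran (cong_refl _) (qrep_qcls s) H). }
    rewrite inv_mul, mul_invA, (dom_below_ran_conj Hs); apply cong_refl.
  - apply cong_refl.
Qed.

Definition embed (s : S) : ker_group * T := (exist _ _ (ker_valued_embed s), cls s).

Lemma embed_in_lsd s : in_lsd ker_group qm qi ker_act (embed s).
Proof.
  apply proj1_sig_inj; extensionality u; simpl; unfold act_fun, embed_fun.
  pose proof (qdom_below_ran_qmul_qinv u (cls s)) as K.
  case_below (qdom_below_ran u (qm (cls s) (qi (cls s)))) H.
  - rewrite (qmul_qmul_qinv (proj1 K H)); reflexivity.
  - case_below (qdom_below_ran u (cls s)) Hs; tauto.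
Qed.

Lemma embed_mul x y : embed (x * y) = lsd_mul ker_group qm qi ker_act (embed x) (embed y).
Proof.
  unfold lsd_mul, embed; simpl; rewrite qmul_qcls; f_equal.
  apply proj1_sig_inj; extensionality u; simpl; unfold act_fun, embed_fun.
  pose proof (qdom_below_ran_qmul_qinv u (cls (x * y))) as Kxy.
  pose proof (qdom_below_ran_qmul_iff u (cls x) (cls y)) as K; rewrite qmul_qcls in K.
  case_below (qdom_below_ran u (cls (x * y))) Hxy.
  - case_below (qdom_below_ran u (qm (cls (x * y)) (qi (cls (x * y))))) Hxy'; [|tauto].
    rewrite (qmul_qmul_qinv Hxy).
    case_below (qdom_below_ran u (cls x)) Hx; [|tauto].
    case_below (qdom_below_ran (qm u (cls x)) (cls y)) Hy; [|tauto].
    rewrite qmulA, qmul_qcls; reassoc.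
    rewrite inv_mulA, (cong_dom (qrep_qmul_qcls u x)), mul_mul_domKA; reflexivity.
  - case_below (qdom_below_ran u (qm (cls (x * y)) (qi (cls (x * y))))) Hxy'; [tauto|].
    case_below (qdom_below_ran u (cls x)) Hx.
    + case_below (qdom_below_ran (qm u (cls x)) (cls y)) Hy; [tauto|].
      rewrite (qran_qmul Hx); symmetry; apply idempotent_ran.
    + symmetry; apply idempotent_ran.
Qed.

Lemma embed_fun_ran s :
  s = inv (rep (cls (ran s))) * (embed_fun s (cls (ran s)) * rep (qm (cls (ran s)) (cls s))).
Proof.
  set (u := cls (ran s)); set (w := rep (qm u (cls s))).
  assert (Hu : rho (rep u) (ran s)) by apply qrep_qcls.
  assert (Hdom_u : dom (rep u) = ran s).
  { rewrite (cong_dom Hu); apply dom_idempotent, idempotent_ran. }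
  assert (Hb : qdom_below_ran u (cls s)).
  { refine (cong_dom_below_ran (cong_sym Hu) (cong_sym (qrep_qcls s)) _).
    unfold dom_below_ran; rewrite (dom_idempotent (idempotent_ran s)); apply idempotent_ran. }
  assert (Hdom_w : dom w = dom s).
  { unfold w; rewrite (cong_dom (qrep_qmul_qcls u s)), dom_mul, Hdom_u, ran_mulK; reflexivity. }
  unfold embed_fun; case_below (qdom_below_ran u (cls s)) H; [|contradiction].
  fold w; reassoc; rewrite inv_mulA, Hdom_u, ran_mulKA; fold (dom w).
  rewrite Hdom_w, mul_domK; reflexivity.
Qed.

Lemma embed_inj x y : embed x = embed y -> x = y.
Proof.
  intro E.
  assert (Ec : cls x = cls y) by exact (f_equal snd E).
  assert (Ef : embed_fun x = embed_fun y) by exact (f_equal (fun p => proj1_sig (fst p)) E).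
  assert (Er : ran x = ran y) by (apply cong_ran, qcls_eq, Ec).
  rewrite (embed_fun_ran x), (embed_fun_ran y), Ef, Er, Ec; reflexivity.
Qed.

End Congruence.

Theorem corollary3p3 (S : InvSemigroup) (rho : S -> S -> Prop)
  (Hcong : @is_congruence S rho) (Hsep : @idempotent_separating S rho) :
  exists (G : Group) (act : @quot S rho -> G -> G),
    is_action G (@qmul S rho) act /\
    exists psi : S -> G * @quot S rho,
      (forall s, in_lsd G (@qmul S rho) (@qinv S rho) act (psi s)) /\
      (forall x y, psi (is_mul S x y) =
                   lsd_mul G (@qmul S rho) (@qinv S rho) act (psi x) (psi y)) /\
      (forall x y, psi x = psi y -> x = y) /\
      (forall x y, snd (psi x) = snd (psi y) <-> rho x y).
Proof.
  exists (ker_group Hcong Hsep), (@ker_act S rho Hcong Hsep); split.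
  - split; [apply ker_act_mul | apply ker_act_comp].
  - exists (embed Hcong Hsep); split; [|split; [|split]].
    + apply embed_in_lsd.
    + apply embed_mul.
    + apply embed_inj.
    + intros x y; apply qcls_eq, Hcong.
Qed.
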